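(* Let $\Lambda$ be a finite $k$-graph with no sources and let $J\sqcup K$ be a partition of $\{1,\dots,k\}$ with $J,K$ both nonempty. Let $\{\xi_{m,x}: m\in\mathbb{N}^J, x\in\Lambda^{m,\infty_K}\}$ be the orthonormal basis of point masses in $\ell^2(\partial^K\Lambda)=\bigoplus_{m\in\mathbb{N}^J}\ell^2(\Lambda^{m,\infty_K})$. For $\lambda\in\Lambda$ let $T_\lambda$ be the operator with $T_\lambda\xi_{m,x}=\xi_{m+d(\lambda)_J,\lambda x}$ if $s(\lambda)=r(x)$ and $T_\lambda\xi_{m,x}=0$ otherwise. Then $\{T_\lambda:\lambda\in\Lambda\}$ is a Toeplitz–Cuntz–Krieger $\Lambda$-family, and $\sum_{e\in v\Lambda^{e_i}}T_eT_e^*=T_v$ for all $v\in\Lambda^0$ and $i\in K$.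
   Context: A $k$-graph is a countable category $\Lambda$ with a degree functor $d:\Lambda\to\mathbb{N}^k$ satisfying the factorisation property (if $d(\lambda)=m+n$ there are unique $\mu,\nu$ with $d(\mu)=m$, $d(\nu)=n$, $\lambda=\mu\nu$); vertices $\Lambda^0=d^{-1}(0)$, range $r$ and source $s$, $\Lambda^n=d^{-1}(n)$, $v\Lambda^n=\{\lambda\in\Lambda^n:r(\lambda)=v\}$; finite means each $\Lambda^n$ finite; no sources means $v\Lambda^n\neq\emptyset$ for all $v,n$. $e_1,\dots,e_k$ are the generators of $\mathbb{N}^k$; $\vee$ is coordinatewise maximum. Paths: for $n\in(\mathbb{N}\cup\{\infty\})^k$, $\Lambda^n$ is the set of degree-preserving functors $x$ from $\Omega_{k,n}$ (morphisms $(p,q)$ with $p\le q\le n$, $d(p,q)=q-p$) to $\Lambda$, $d(x)=n$, $r(x)=x(0,0)$; for $\lambda\in\Lambda$ with $s(\lambda)=r(x)$, $\lambda x$ is the unique path of degree $d(\lambda)+d(x)$ with $(\lambda x)(0,d(\lambda))=\lambda$ and $(\lambda x)(d(\lambda)+p,d(\lambda)+q)=x(p,q)$. Writing $n=(n_J,n_K)$: for $m\in\mathbb{N}^J$, $\Lambda^{m,\infty_K}$ is the set of paths $x$ with $d(x)_J=m$ and $d(x)_i=\infty$ for $i\in K$, and $\partial^K\Lambda=\bigcup_{m\in\mathbb{N}^J}\Lambda^{m,\infty_K}$. For $\mu,\nu\in\Lambda$, $\Lambda^{\min}(\mu,\nu)=\{(\eta,\zeta)\in\Lambda\times\Lambda:\mu\eta=\nu\zeta,\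 d(\mu\eta)=d(\mu)\vee d(\nu)\}$. A Toeplitz–Cuntz–Krieger $\Lambda$-family is a set of partial isometries $\{T_\lambda\}$ with (T1) $\{T_v:v\in\Lambda^0\}$ mutually orthogonal projections; (T2) $T_\lambda T_\mu=T_{\lambda\mu}$ when $s(\lambda)=r(\mu)$; (T3) $T_\lambda^*T_\lambda=T_{s(\lambda)}$; (T4) $T_v\ge\sum_{\lambda\in v\Lambda^n}T_\lambda T_\lambda^*$ for all $v,n$; (T5) $T_\mu^*T_\nu=\sum_{(\eta,\zeta)\in\Lambda^{\min}(\mu,\nu)}T_\eta T_\zeta^*$ (empty sum $=0$). *)

From Stdlib Require Import Reals ClassicalEpsilon.
From mathcomp Require Import all_boot.
From Stdlib Require List.

Set Implicit Arguments.
Unset Strict Implicit.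
Unset Printing Implicit Defensive.

Definition deg (k : nat) := {ffun 'I_k -> nat}.
Definition dzero (k : nat) : deg k := [ffun _ => 0%N].
Definition addd k (m n : deg k) : deg k := [ffun i => (m i + n i)%N].
Definition joind k (m n : deg k) : deg k := [ffun i => maxn (m i) (n i)].
Definition unit_deg k (i : 'I_k) : deg k := [ffun j => if j == i then 1%N else 0%N].
Definition leqd k (p q : deg k) : bool := [forall i, (p i <= q i)%N].

(* kr = range r (codomain), ks = source s (domain), kcomp mu nu = mu nu *)
(* (defined when ks mu = kr nu).                                       *)
Record kgraph (k : nat) := KGraph {
  kObj : Type;
  kMor : Type;
  kr : kMor -> kObj;
  ks : kMor -> kObj;
  kid : kObj -> kMor;
  kcomp : kMor -> kMor -> kMor;
  kd : kMor -> deg k;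
  kr_id : forall v, kr (kid v) = v;
  ks_id : forall v, ks (kid v) = v;
  kr_comp : forall mu nu, ks mu = kr nu -> kr (kcomp mu nu) = kr mu;
  ks_comp : forall mu nu, ks mu = kr nu -> ks (kcomp mu nu) = ks nu;
  kcomp_idl : forall l, kcomp (kid (kr l)) l = l;
  kcomp_idr : forall l, kcomp l (kid (ks l)) = l;
  kcomp_assoc : forall a b c, ks a = kr b -> ks b = kr c ->
      kcomp (kcomp a b) c = kcomp a (kcomp b c);
  kd_id : forall v, kd (kid v) = dzero k;
  kd_comp : forall mu nu, ks mu = kr nu -> kd (kcomp mu nu) = addd (kd mu) (kd nu);
  kfactor : forall l (m n : deg k), kd l = addd m n ->
      exists mu nu, [/\ ks mu = kr nu, kd mu = m, kd nu = n & l = kcomp mu nu];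
  kfactor_uniq : forall mu nu mu' nu', ks mu = kr nu -> ks mu' = kr nu' ->
      kd mu = kd mu' -> kd nu = kd nu' -> kcomp mu nu = kcomp mu' nu' ->
      mu = mu' /\ nu = nu';
  kcountable : exists f : kMor -> nat, injective f
}.

Definition kfinite k (G : kgraph k) : Prop :=
  forall n : deg k, exists l : seq (kMor G), forall lam, kd lam = n -> List.In lam l.

Definition no_sources k (G : kgraph k) : Prop :=
  forall (v : kObj G) (n : deg k), exists lam, kr lam = v /\ kd lam = n.

Definition Lmin k (G : kgraph k) (mu nu eta zeta : kMor G) : Prop :=
  [/\ ks mu = kr eta, ks nu = kr zeta, kcomp mu eta = kcomp nu zeta
    & kd (kcomp mu eta) = joind (kd mu) (kd nu)].

(* Boundary paths.  K : pred 'I_k is the set K, J is its complement.   *)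
(* For m in N^J (represented by m : deg k, only J-coordinates used),   *)
(* the degree n = (m, ∞_K); Ω_{k,n} has objects p with p_J <= m and    *)
(* morphisms (p,q), p <= q <= n.                                        *)
Definition inOm k (K : pred 'I_k) (m p : deg k) : bool :=
  [forall i, ~~ K i ==> (p i <= m i)%N].

Lemma inOm0 k (K : pred 'I_k) (m : deg k) : inOm K m (dzero k).
Proof. by apply/forallP => i; apply/implyP => _; rewrite ffunE. Qed.

Record kpath k (G : kgraph k) (K : pred 'I_k) (m : deg k) := KPath {
  xo : forall p : deg k, inOm K m p -> kObj G;
  xm : forall p q : deg k, inOm K m p -> inOm K m q -> leqd p q -> kMor G;
  xm_r : forall p q hp hq hpq, kr (@xm p q hp hq hpq) = @xo p hp;
  xm_s : forall p q hp hq hpq, ks (@xm p q hp hq hpq) = @xo q hq;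
  xm_id : forall p hp hpp, @xm p p hp hp hpp = kid (@xo p hp);
  xm_comp : forall p q t hp hq ht hpq hqt hpt,
      @xm p t hp ht hpt = kcomp (@xm p q hp hq hpq) (@xm q t hq ht hqt);
  xm_deg : forall p q hp hq hpq, kd (@xm p q hp hq hpq) = [ffun i => (q i - p i)%N]
}.

Definition rpath k (G : kgraph k) (K : pred 'I_k) (m : deg k) (x : kpath G K m) : kObj G :=
  xo x (inOm0 K m).

Definition IsConcat k (G : kgraph k) (K : pred 'I_k) (lam : kMor G) (m m' : deg k)
  (x : kpath G K m) (y : kpath G K m') : Prop :=
  (forall (h0 : inOm K m' (dzero k)) (h1 : inOm K m' (kd lam)) (h01 : leqd (dzero k) (kd lam)),
      xm y h0 h1 h01 = lam) /\
  (forall (p q : deg k) (hp : inOm K m p) (hq : inOm K m q) (hpq : leqd p q)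
      (hp' : inOm K m' (addd (kd lam) p)) (hq' : inOm K m' (addd (kd lam) q))
      (hpq' : leqd (addd (kd lam) p) (addd (kd lam) q)),
      xm y hp' hq' hpq' = xm x hp hq hpq).

(* index set of the point-mass basis of l^2(∂^K Λ): pairs (m, x) with
   m in N^J (normalised: K-coordinates are 0) and x in Λ^{m,∞_K} *)
Record bidx k (G : kgraph k) (K : pred 'I_k) := BIdx {
  bm : deg k;
  bm_norm : [forall i, K i ==> (bm i == 0%N)];
  bx : kpath G K bm
}.

Definition dJ k (G : kgraph k) (K : pred 'I_k) (lam : kMor G) : deg k :=
  [ffun i => if K i then 0%N else kd lam i].

(* Operators on l^2(X), represented by their matrix coefficients      *)
(* A y x = < A ξ_x , ξ_y > with respect to the orthonormal basis of    *)
(* point masses.  (Real scalars.)                        *)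
Local Open Scope R_scope.
Definition rsum T (f : T -> R) (l : seq T) : R := foldr (fun x acc => (f x + acc)) 0 l.

Definition HasSum X (f : X -> R) (s : R) : Prop :=
  forall eps, (0 < eps) -> exists F0 : seq X, forall F : seq X,
    List.NoDup F -> List.incl F0 F -> (Rabs (rsum f F - s) < eps).

Definition tsum X (f : X -> R) : R := epsilon (inhabits 0) (HasSum f).

Definition op (X : Type) := X -> X -> R.
Definition adj X (A : op X) : op X := fun y x => A x y.
Definition mmul X (A B : op X) : op X := fun y x => tsum (fun z => (A y z * B z x)).
Definition mzero X : op X := fun _ _ => 0.
Definition madd X (A B : op X) : op X := fun y x => (A y x + B y x).
Definition msub X (A B : op X) : op X := fun y x => (A y x - B y x).
Definition msum I X (F : I -> op X) (l : seq I) : op X :=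
  fun y x => rsum (fun i => F i y x) l.
Definition meq X (A B : op X) : Prop := forall y x, A y x = B y x.

Definition bounded X (A : op X) : Prop :=
  exists C : R, forall (F G : seq X) (c : X -> R), List.NoDup F -> List.NoDup G ->
    (rsum (fun y => let u := rsum (fun x => A y x * c x) F in u * u) G
      <= C * rsum (fun x => c x * c x) F).

Definition positive X (A : op X) : Prop :=
  meq (adj A) A /\
  forall (F : seq X) (c : X -> R), List.NoDup F ->
    (0 <= rsum (fun y => rsum (fun x => c y * A y x * c x) F) F).

Definition is_projection X (A : op X) : Prop := meq (adj A) A /\ meq (mmul A A) A.
Definition is_partial_isometry X (A : op X) : Prop :=
  bounded A /\ meq (mmul A (mmul (adj A) A)) A.

Definition TCK_family k (G : kgraph k) X (T : kMor G -> op X) : Prop :=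
  [/\ (forall lam, is_partial_isometry (T lam)),
      ((forall v, is_projection (T (kid v))) /\
       (forall v w, v <> w -> meq (mmul (T (kid v)) (T (kid w))) (@mzero X))),
      (forall lam mu, ks lam = kr mu -> meq (mmul (T lam) (T mu)) (T (kcomp lam mu))),
      (forall lam, meq (mmul (adj (T lam)) (T lam)) (T (kid (ks lam))))
    &
      ((forall (v : kObj G) (n : deg k) (l : seq (kMor G)), List.NoDup l ->
         (forall lam, List.In lam l <-> (kr lam = v /\ kd lam = n)) ->
         positive (msub (T (kid v)) (msum (fun lam => mmul (T lam) (adj (T lam))) l)))
    /\
      (forall (mu nu : kMor G) (l : seq (kMor G * kMor G)), List.NoDup l ->
         (forall pr, List.In pr l <-> Lmin mu nu pr.1 pr.2) ->
         meq (mmul (adj (T mu)) (T nu))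
             (msum (fun pr => mmul (T pr.1) (adj (T pr.2))) l)))].

Definition Tpoint k (G : kgraph k) (K : pred 'I_k) (lam : kMor G) : op (bidx G K) :=
  fun y x =>
    if excluded_middle_informative
         [/\ ks lam = rpath (bx x), bm y = addd (bm x) (dJ K lam)
           & IsConcat lam (bx x) (bx y)]
    then 1 else 0.
Arguments Tpoint {k G} K lam _ _.

From Pilot Require Import Defs.
From Stdlib Require Import Reals.
From mathcomp Require Import all_boot.
From Stdlib Require List.
From Stdlib Require Import ClassicalEpsilon FunctionalExtensionality ProofIrrelevance Lra.
From mathcomp Require Import zify.

Set Implicit Arguments.
Unset Strict Implicit.
Unset Printing Implicit Defensive.

(* Each T_lam has a 0/1 matrix: it is the partial injection x |-> lam x of the
   point-mass basis.  So every Toeplitz-Cuntz-Krieger relation reduces to a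
   combinatorial fact about concatenation of boundary paths: concatenation is
   functional and injective, associative, and a path y equals lam x for some x
   exactly when y begins with lam.  For (T5), a boundary path beginning with
   both mu and nu begins with mu eta = nu zeta for a unique (eta, zeta) in
   Lambda^min(mu, nu).  For i in K every boundary path has infinite degree in
   direction i, so it begins with exactly one edge of degree e_i, which gives
   the Cuntz-Krieger relation at v. *)

Definition subd k (m n : deg k) : deg k := [ffun i => (m i - n i)%N].

Lemma degP k (p q : deg k) : p = q <-> forall i, p i = q i.
Proof. split=> [-> //|H]; exact/ffunP. Qed.

Lemma leqdP k (p q : deg k) : leqd p q <-> forall i, (p i <= q i)%N.
Proof. split=> [/forallP H i|H]; [exact: H | exact/forallP]. Qed.

Lemma inOmP k (K : pred 'I_k) m p : inOm K m p <-> forall i, ~~ K i -> (p i <= m i)%N.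
Proof. split=> [/forallP H i|H]; [exact/implyP/H | apply/forallP=> i; exact/implyP/H]. Qed.

Lemma leqdd k (p : deg k) : leqd p p.
Proof. exact/leqdP. Qed.

(* Reduces a goal about degrees to one coordinate i and closes it by [lia]. *)
Ltac deg_lia := repeat match goal with
 | H : is_true (leqd _ _) |- _ => move/leqdP: H => H
 | H : is_true (inOm _ _ _) |- _ => move/inOmP: H => H
 | H : @eq (deg _) _ _ |- _ => move/degP: H => H
 end;
 match goal with
 | |- is_true (leqd _ _) => apply/leqdP
 | |- is_true (inOm _ _ _) => apply/inOmP
 | |- @eq (deg _) _ _ => apply/degP
 | _ => idtac end;
 let i := fresh "i" in move=> i;
 repeat match goal with H : forall j, _ |- _ => move: (H i) => ?; clear H end;
 unfold addd, subd, joind, dJ, dzero in *;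
 repeat match goal with H : context [ fun_of_fin (finfun _) _ ] |- _ => rewrite ffunE in H end;
 rewrite ?ffunE;
 try match goal with K : pred _ |- _ => destruct (K i) end; lia.

Section Factorisation.
Variables (k : nat) (G : kgraph k).
Notation Mor := (kMor G).

Lemma kid_of_deg0 (a : Mor) : kd a = dzero k -> a = kid (kr a).
Proof.
move=> h.
have e : kcomp (kid (kr a)) a = kcomp a (kid (ks a)) by rewrite kcomp_idl kcomp_idr.
have [e1 _] := kfactor_uniq (ks_id (kr a)) (esym (kr_id (ks a)))
  (etrans (kd_id _) (esym h)) (etrans h (esym (kd_id _))) e.
exact: esym e1.
Qed.

Definition factor3 (w : Mor) (p q : deg k) (t : Mor * Mor * Mor) : Prop :=
  [/\ ks t.1.1 = kr t.1.2, ks t.1.2 = kr t.2, w = kcomp (kcomp t.1.1 t.1.2) t.2,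
      kd t.1.1 = p & kd t.1.2 = subd q p] /\ kd t.2 = subd (kd w) q.

Lemma factor3_uniq w p q t t' : factor3 w p q t -> factor3 w p q t' -> t = t'.
Proof.
case: t => [[a b] c]; case: t' => [[a' b'] c'] /=.
move=> [[h1 h2 h3 h4 h5] h6] [[h1' h2' h3' h4' h5'] h6']; simpl in *.
have hab : ks (kcomp a b) = kr c by rewrite ks_comp.
have hab' : ks (kcomp a' b') = kr c' by rewrite ks_comp.
have dk : kd (kcomp a b) = kd (kcomp a' b') by rewrite !kd_comp // h4 h5 h4' h5'.
have [e ec] := kfactor_uniq hab hab' dk (etrans h6 (esym h6')) (etrans (esym h3) h3').
have [ea eb] := kfactor_uniq h1 h1' (etrans h4 (esym h4')) (etrans h5 (esym h5')) e.
by subst.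
Qed.

Lemma factor3_exists w p q : leqd p q -> leqd q (kd w) -> exists t, factor3 w p q t.
Proof.
move=> hpq hqw.
have [u [c [e1 e2 e3 e4]]] := @kfactor _ G w q (subd (kd w) q) ltac:(deg_lia).
have [a [b [f1 f2 f3 f4]]] := @kfactor _ G u p (subd q p) ltac:(rewrite e2; deg_lia).
exists (a, b, c); split; [split|] => //=.
- by rewrite -e1 f4 ks_comp.
- by rewrite -f4.
Qed.

(* The segment w(p, q) of w; a junk value when p <= q <= d(w) fails. *)
Definition seg (w : Mor) (p q : deg k) : Mor :=
  (epsilon (inhabits (w, w, w)) (factor3 w p q)).1.2.

Lemma seg_factor3 w p q t : factor3 w p q t -> seg w p q = t.1.2.
Proof.
move=> h; rewrite /seg.
have e := epsilon_spec (inhabits (w, w, w)) (factor3 w p q) (ex_intro _ t h).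
by rewrite (factor3_uniq e h).
Qed.

Lemma seg_comp3 a b c p q : ks a = kr b -> ks b = kr c -> kd a = p -> kd b = subd q p ->
  leqd p q -> seg (kcomp (kcomp a b) c) p q = b.
Proof.
move=> h1 h2 h3 h4 h5; apply: (seg_factor3 (t := (a, b, c))); split; [split|] => //=.
rewrite kd_comp ?ks_comp // kd_comp // h3 h4; deg_lia.
Qed.

Lemma Lmin_deg_l (mu nu eta zeta : Mor) : Lmin mu nu eta zeta ->
  kd eta = subd (joind (kd mu) (kd nu)) (kd mu).
Proof. move=> [h1 h2 h3 h4]; rewrite kd_comp // in h4; deg_lia. Qed.

Lemma Lmin_deg_r (mu nu eta zeta : Mor) : Lmin mu nu eta zeta ->
  kd zeta = subd (joind (kd mu) (kd nu)) (kd nu).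
Proof. move=> [h1 h2 h3 h4]; rewrite h3 kd_comp // in h4; deg_lia. Qed.

End Factorisation.

Section Paths.
Variables (k : nat) (G : kgraph k) (K : pred 'I_k).
Notation Mor := (kMor G).

Lemma xm_congr m (x : kpath G K m) p q p' q' hp hq hpq hp' hq' hpq' :
  p = p' -> q = q' -> @xm _ _ _ _ x p q hp hq hpq = @xm _ _ _ _ x p' q' hp' hq' hpq'.
Proof.
move=> ep eq; subst p' q'.
by rewrite (bool_irrelevance hp hp') (bool_irrelevance hq hq') (bool_irrelevance hpq hpq').
Qed.

Lemma xo_congr m (x : kpath G K m) p p' hp hp' :
  p = p' -> @xo _ _ _ _ x p hp = @xo _ _ _ _ x p' hp'.
Proof. by move=> e; subst p'; rewrite (bool_irrelevance hp hp'). Qed.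

Lemma kpath_ext m (x y : kpath G K m) :
  (forall p q hp hq hpq, @xm _ _ _ _ x p q hp hq hpq = @xm _ _ _ _ y p q hp hq hpq) -> x = y.
Proof.
case: x => xo1 xm1 r1 s1 i1 c1 d1; case: y => xo2 xm2 r2 s2 i2 c2 d2 /= H.
have eo : xo1 = xo2.
  apply: functional_extensionality_dep => p; apply: functional_extensionality_dep => hp.
  by rewrite -(r1 p p hp hp (leqdd p)) -(r2 p p hp hp (leqdd p)) H.
subst xo2.
have em : xm1 = xm2 by do 5 (apply: functional_extensionality_dep => ?); exact: H.
subst xm2; f_equal; exact: proof_irrelevance.
Qed.

Lemma seg_xm m (y : kpath G K m) p q t hp hq ht hpq (hqt : leqd q t)
    (h0 : inOm K m (dzero k)) h0t :
  seg (@xm _ _ _ _ y (dzero k) t h0 ht h0t) p q = @xm _ _ _ _ y p q hp hq hpq.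
Proof.
have h0p : leqd (dzero k) p by deg_lia.
have h0q : leqd (dzero k) q by deg_lia.
rewrite (xm_comp y h0 hq ht h0q hqt) (xm_comp y h0 hp hq h0p hpq).
apply: seg_comp3; rewrite ?xm_r ?xm_s ?xm_deg //; deg_lia.
Qed.

(* [xm] with the proof arguments hidden; junk value off Omega_{k,(m,oo_K)}. *)
Definition xmt m (x : kpath G K m) (p q : deg k) : Mor :=
  match excluded_middle_informative (inOm K m p /\ inOm K m q /\ leqd p q) with
  | left H => @xm _ _ _ _ x p q (proj1 H) (proj1 (proj2 H)) (proj2 (proj2 H))
  | right _ => kid (xo x (inOm0 K m)) end.

Lemma xmtE m (x : kpath G K m) p q hp hq hpq : xmt x p q = @xm _ _ _ _ x p q hp hq hpq.
Proof.
rewrite /xmt; case: excluded_middle_informative => [H|[]] //.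
exact: xm_congr.
Qed.

Section MakePath.
Variables (m : deg k) (Y : deg k -> deg k -> Mor).
Hypothesis Y_deg : forall p q, inOm K m p -> inOm K m q -> leqd p q ->
  kd (Y p q) = [ffun i => (q i - p i)%N].
Hypothesis Y_comp : forall p q t, inOm K m p -> inOm K m q -> inOm K m t ->
  leqd p q -> leqd q t -> ks (Y p q) = kr (Y q t) /\ Y p t = kcomp (Y p q) (Y q t).

Definition mkpath : kpath G K m.
refine (@KPath _ G K m (fun p hp => kr (Y p p)) (fun p q hp hq hpq => Y p q) _ _ _ _ _).
- move=> p q hp hq hpq /=.
  have [h e] := Y_comp hp hp hq (leqdd p) hpq.
  by rewrite {1}e kr_comp.
- by move=> p q hp hq hpq /=; have [h _] := Y_comp hp hq hq hpq (leqdd q).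
- move=> p hp hpp /=; apply: kid_of_deg0; rewrite Y_deg //; deg_lia.
- by move=> p q t hp hq ht hpq hqt hpt /=; have [_ e] := Y_comp hp hq ht hpq hqt.
- move=> p q hp hq hpq /=; exact: Y_deg.
Defined.

Lemma mkpathE p q hp hq hpq : @xm _ _ _ _ mkpath p q hp hq hpq = Y p q.
Proof. by []. Qed.

End MakePath.

Section Concatenation.
Variables (m : deg k) (lam : Mor) (x : kpath G K m).
Hypothesis hl : ks lam = rpath x.

Definition cat_deg := addd m (dJ K lam).

(* (lam x)(p, q) is the (p, q)-segment of (lam x)(0, q v d(lam)), which is
   lam x(0, (q v d(lam)) - d(lam)). *)
Definition cat_reach (q : deg k) := subd (joind q (kd lam)) (kd lam).
Definition cat_prefix (q : deg k) := kcomp lam (xmt x (dzero k) (cat_reach q)).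
Definition cat_seg (p q : deg k) := seg (cat_prefix q) p q.

Lemma cat_reach_in q : inOm K cat_deg q -> inOm K m (cat_reach q).
Proof. rewrite /cat_deg /cat_reach => h; deg_lia. Qed.

Lemma ks_lam_xm q h0 hq h0q : ks lam = kr (@xm _ _ _ _ x (dzero k) q h0 hq h0q).
Proof. by rewrite xm_r hl /rpath (bool_irrelevance h0 (inOm0 K m)). Qed.

Lemma cat_prefixE q (hq : inOm K cat_deg q) h0 h0q :
  cat_prefix q = kcomp lam (@xm _ _ _ _ x (dzero k) (cat_reach q) h0 (cat_reach_in hq) h0q).
Proof. by rewrite /cat_prefix (xmtE _ h0 (cat_reach_in hq) h0q). Qed.

Lemma cat_prefix_deg q : inOm K cat_deg q -> kd (cat_prefix q) = joind q (kd lam).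
Proof.
move=> hq; have h0q : leqd (dzero k) (cat_reach q) by deg_lia.
rewrite (cat_prefixE hq (inOm0 K m) h0q) kd_comp ?xm_deg; last exact: ks_lam_xm.
rewrite /cat_reach; deg_lia.
Qed.

Lemma cat_seg_deg p q : inOm K cat_deg p -> inOm K cat_deg q -> leqd p q ->
  kd (cat_seg p q) = [ffun i => (q i - p i)%N].
Proof.
move=> hp hq hpq.
have [t ht] := factor3_exists (w := cat_prefix q) hpq
  ltac:(rewrite cat_prefix_deg //; deg_lia).
by rewrite /cat_seg (seg_factor3 ht); case: ht => [[_ _ _ _ ->] _].
Qed.

Lemma cat_prefix_extend q t (hq : inOm K cat_deg q) (ht : inOm K cat_deg t) : leqd q t ->
  exists rho, ks (cat_prefix q) = kr rho /\ cat_prefix t = kcomp (cat_prefix q) rho.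
Proof.
move=> hqt.
have h0 := inOm0 K m.
have hqq : leqd (cat_reach q) (cat_reach t) by rewrite /cat_reach; deg_lia.
have h0q : leqd (dzero k) (cat_reach q) by deg_lia.
have h0t : leqd (dzero k) (cat_reach t) by deg_lia.
exists (@xm _ _ _ _ x _ _ (cat_reach_in hq) (cat_reach_in ht) hqq).
have hlx := ks_lam_xm h0 (cat_reach_in hq) h0q.
rewrite (cat_prefixE hq h0 h0q) (cat_prefixE ht h0 h0t); split.
- by rewrite ks_comp // xm_s xm_r.
- rewrite kcomp_assoc //; last by rewrite xm_s xm_r.
  congr kcomp; rewrite -xm_comp; exact: xm_congr.
Qed.

Lemma cat_seg_comp p q t : inOm K cat_deg p -> inOm K cat_deg q -> inOm K cat_deg t ->
  leqd p q -> leqd q t ->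
  ks (cat_seg p q) = kr (cat_seg q t) /\ cat_seg p t = kcomp (cat_seg p q) (cat_seg q t).
Proof.
move=> hp hq ht hpq hqt.
have [rho [hr ewt]] := cat_prefix_extend hq ht hqt.
have [[[a b] c] h3] := factor3_exists (w := cat_prefix q) hpq
  ltac:(rewrite cat_prefix_deg //; deg_lia).
have ypq : cat_seg p q = b by rewrite /cat_seg (seg_factor3 h3).
case: h3 => [[/= h1 h2 h4 h5 h6] h7].
have hcr : ks c = kr rho by rewrite -hr h4 ks_comp // ks_comp.
have hdq : kd (kcomp a b) = q by rewrite kd_comp // h5 h6; deg_lia.
have dr : kd (cat_prefix t) = addd (kd (cat_prefix q)) (kd rho) by rewrite ewt kd_comp.
have hfa : kd (kcomp c rho) = addd (subd t q) (subd (kd (kcomp c rho)) (subd t q)).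
  rewrite !cat_prefix_deg // in dr; rewrite cat_prefix_deg // in h7.
  rewrite kd_comp // h7; clear -dr hqt; deg_lia.
have [d [e [f1 f2 f3 f4]]] := kfactor hfa.
have hab : ks (kcomp a b) = kr c by rewrite ks_comp.
have hdc : kr d = kr c by rewrite -(kr_comp f1) -f4 (kr_comp hcr).
have had : ks (kcomp a b) = kr d by rewrite hab hdc.
have ewt2 : cat_prefix t = kcomp (kcomp (kcomp a b) d) e.
  by rewrite ewt h4 (kcomp_assoc hab hcr) f4 -(kcomp_assoc had f1).
have hbd : ks b = kr d by rewrite h2 hdc.
have yqt : cat_seg q t = d by rewrite /cat_seg ewt2; exact: seg_comp3.
have ypt : cat_seg p t = kcomp b d.
  rewrite /cat_seg ewt2 (kcomp_assoc h1 hbd); apply: seg_comp3.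
  - by rewrite kr_comp.
  - by rewrite ks_comp.
  - exact: h5.
  - rewrite kd_comp // h6 f2; deg_lia.
  - deg_lia.
by rewrite ypq yqt ypt.
Qed.

Definition cat_path : kpath G K cat_deg := mkpath cat_seg_deg cat_seg_comp.

Lemma cat_path_concat : IsConcat lam x cat_path.
Proof.
have h0m := inOm0 K m.
split.
- move=> h0 h1 h01; rewrite mkpathE /cat_seg.
  have h0t : leqd (dzero k) (cat_reach (kd lam)) by rewrite /cat_reach; deg_lia.
  rewrite (cat_prefixE h1 h0m h0t) -[lam in kcomp lam]kcomp_idl.
  apply: seg_comp3; rewrite ?ks_id ?kd_id //; [exact: ks_lam_xm | deg_lia].
- move=> p q hp hq hpq hp' hq' hpq'; rewrite mkpathE /cat_seg /cat_prefix.
  have -> : cat_reach (addd (kd lam) q) = q by rewrite /cat_reach; deg_lia.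
  have h0p : leqd (dzero k) p by deg_lia.
  have h0q : leqd (dzero k) q by deg_lia.
  rewrite (xmtE x h0m hq h0q) (xm_comp x h0m hp hq h0p hpq).
  have hA := ks_lam_xm h0m hp h0p.
  have hAB : ks (xm x h0m hp h0p) = kr (xm x hp hq hpq) by rewrite xm_s xm_r.
  rewrite -(kcomp_assoc hA hAB) -[X in seg X]kcomp_idr.
  apply: seg_comp3.
  + by rewrite ks_comp.
  + by rewrite kr_id ks_comp // ks_comp.
  + rewrite kd_comp // xm_deg; deg_lia.
  + rewrite xm_deg; deg_lia.
  + deg_lia.
Qed.

Lemma concat_cat_seg (y : kpath G K cat_deg) : IsConcat lam x y ->
  forall p q hp hq hpq, @xm _ _ _ _ y p q hp hq hpq = cat_seg p q.
Proof.
move=> [c1 c2] p q hp hq hpq.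
have h0 := inOm0 K cat_deg.
have hn : inOm K cat_deg (kd lam) by rewrite /cat_deg; deg_lia.
have hj : inOm K cat_deg (joind q (kd lam)) by rewrite /cat_deg in hq hn *; deg_lia.
have hqj : leqd q (joind q (kd lam)) by deg_lia.
have h0j : leqd (dzero k) (joind q (kd lam)) by deg_lia.
have h0n : leqd (dzero k) (kd lam) by deg_lia.
have hnj : leqd (kd lam) (joind q (kd lam)) by deg_lia.
rewrite -(seg_xm y hp hq hj hpq hqj h0 h0j) (xm_comp y h0 hn hj h0n hnj) c1.
have h0m := inOm0 K m.
have htq := cat_reach_in hq.
have h0t : leqd (dzero k) (cat_reach q) by deg_lia.
have hn0 : inOm K cat_deg (addd (kd lam) (dzero k)) by rewrite /cat_deg in hn *; deg_lia.
have hnt : inOm K cat_deg (addd (kd lam) (cat_reach q)).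
  by rewrite /cat_deg /cat_reach in hj *; deg_lia.
have hnt' : leqd (addd (kd lam) (dzero k)) (addd (kd lam) (cat_reach q)) by deg_lia.
have := c2 _ _ h0m htq h0t hn0 hnt hnt'.
rewrite (xm_congr y _ _ _ hn hj hnj); [| deg_lia | rewrite /cat_reach; deg_lia] => ->.
by rewrite /cat_seg /cat_prefix (xmtE x h0m htq h0t).
Qed.

End Concatenation.

Section RemovePrefix.
Variables (m : deg k) (lam : Mor) (y : kpath G K m).
Hypothesis hn : inOm K m (kd lam).

Definition drop_deg := subd m (dJ K lam).
Definition drop_seg (p q : deg k) := xmt y (addd (kd lam) p) (addd (kd lam) q).

Lemma drop_in p : inOm K drop_deg p -> inOm K m (addd (kd lam) p).
Proof. rewrite /drop_deg => h; have hn0 := hn; deg_lia. Qed.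

Lemma drop_le p q : leqd p q -> leqd (addd (kd lam) p) (addd (kd lam) q).
Proof. move=> h; deg_lia. Qed.

Lemma drop_segE p q (hp : inOm K drop_deg p) (hq : inOm K drop_deg q) (hpq : leqd p q) :
  drop_seg p q = @xm _ _ _ _ y _ _ (drop_in hp) (drop_in hq) (drop_le hpq).
Proof. exact: xmtE. Qed.

Lemma drop_seg_deg p q : inOm K drop_deg p -> inOm K drop_deg q -> leqd p q ->
  kd (drop_seg p q) = [ffun i => (q i - p i)%N].
Proof. move=> hp hq hpq; rewrite (drop_segE hp hq hpq) xm_deg; deg_lia. Qed.

Lemma drop_seg_comp p q t : inOm K drop_deg p -> inOm K drop_deg q -> inOm K drop_deg t ->
  leqd p q -> leqd q t ->
  ks (drop_seg p q) = kr (drop_seg q t) /\ drop_seg p t = kcomp (drop_seg p q) (drop_seg q t).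
Proof.
move=> hp hq ht hpq hqt; have hpt : leqd p t by deg_lia.
rewrite (drop_segE hp hq hpq) (drop_segE hq ht hqt) (drop_segE hp ht hpt).
split; first by rewrite xm_s xm_r.
by rewrite -xm_comp; [exact: drop_le | move=> ?; exact: xm_congr].
Qed.

Definition drop_path : kpath G K drop_deg := mkpath drop_seg_deg drop_seg_comp.

Lemma drop_path_concat :
  (forall h0 h1 h01, @xm _ _ _ _ y (dzero k) (kd lam) h0 h1 h01 = lam) ->
  ks lam = rpath drop_path /\ IsConcat lam drop_path y.
Proof.
move=> H; have h0 := inOm0 K m; have h01 : leqd (dzero k) (kd lam) by deg_lia.
have hs0 := inOm0 K drop_deg.
split; last split.
- rewrite -(H h0 hn h01) xm_s /rpath /= (drop_segE hs0 hs0 (leqdd _)) xm_r.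
  have hn0 := hn; apply: xo_congr; deg_lia.
- move=> ? ? ?; exact: H.
- by move=> p q hp hq hpq hp' hq' hpq'; rewrite mkpathE /drop_seg xmtE.
Qed.

End RemovePrefix.

End Paths.

Section BasisConcatenation.
Variables (k : nat) (G : kgraph k) (K : pred 'I_k).
Notation Mor := (kMor G).
Notation X := (bidx G K).

Definition bcat (lam : Mor) (x y : X) : Prop :=
  [/\ ks lam = rpath (bx x), bm y = addd (bm x) (dJ K lam) & IsConcat lam (bx x) (bx y)].

Lemma bm_K (x : X) i : K i -> bm x i = 0%N.
Proof. by move=> hi; have /forallP/(_ i) := bm_norm x; rewrite hi => /eqP. Qed.

Lemma BIdx_congr m h1 h2 (p1 p2 : kpath G K m) :
  p1 = p2 -> @BIdx _ _ _ m h1 p1 = @BIdx _ _ _ m h2 p2.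
Proof. by move=> ->; rewrite (bool_irrelevance h1 h2). Qed.

Lemma bcat_functional lam x y1 y2 : bcat lam x y1 -> bcat lam x y2 -> y1 = y2.
Proof.
case: x => m h px; case: y1 => m1 h1 p1; case: y2 => m2 h2 p2 /=.
move=> [hl e1 c1] [_ e2 c2]; simpl in *; subst m1 m2.
apply: BIdx_congr; apply: kpath_ext => p q hp hq hpq.
by rewrite (concat_cat_seg c1) (concat_cat_seg c2).
Qed.

Lemma bcat_inj lam x1 x2 y : bcat lam x1 y -> bcat lam x2 y -> x1 = x2.
Proof.
case: x1 => m1 h1 p1; case: x2 => m2 h2 p2; case: y => my hy py /=.
move=> [hl1 e1 [_ c1]] [hl2 e2 [_ c2]]; simpl in *.
have em : m1 = m2.
  by apply/degP => i; move: e1; rewrite e2 => /degP/(_ i); rewrite !ffunE; lia.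
subst m2 my; apply: BIdx_congr; apply: kpath_ext => p q hp hq hpq.
have hp' : inOm K (addd m1 (dJ K lam)) (addd (kd lam) p) by deg_lia.
have hq' : inOm K (addd m1 (dJ K lam)) (addd (kd lam) q) by deg_lia.
have hpq' : leqd (addd (kd lam) p) (addd (kd lam) q) by deg_lia.
by rewrite -(c1 p q hp hq hpq hp' hq' hpq') -(c2 p q hp hq hpq hp' hq' hpq').
Qed.

Lemma bcat_exists lam x : ks lam = rpath (bx x) -> exists y, bcat lam x y.
Proof.
move=> hl.
have hn : [forall i, K i ==> (cat_deg K (bm x) lam i == 0%N)].
  apply/forallP => i; apply/implyP => hi; rewrite /cat_deg /addd /dJ !ffunE hi bm_K //.
by exists (BIdx hn (cat_path hl)); split => //=; exact: cat_path_concat.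
Qed.

Definition begins_with (lam : Mor) (y : X) : Prop :=
  inOm K (bm y) (kd lam) /\
  forall h0 h1 h01, @xm _ _ _ _ (bx y) (dzero k) (kd lam) h0 h1 h01 = lam.

Lemma bcat_begins_with lam x y : bcat lam x y -> begins_with lam y.
Proof. by move=> [hl e [c1 c2]]; split => //; rewrite e; deg_lia. Qed.

Lemma begins_with_bcat lam y : begins_with lam y -> exists x, bcat lam x y.
Proof.
move=> [hn H].
have hs : [forall i, K i ==> (drop_deg K (bm y) lam i == 0%N)].
  apply/forallP => i; apply/implyP => hi; rewrite /drop_deg /subd /dJ !ffunE hi bm_K //.
have [e1 e2] := drop_path_concat hn H.
exists (BIdx hs (drop_path (bx y) hn)); split => //=.
apply/degP => i; rewrite /drop_deg /subd /addd /dJ !ffunE.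
case hi: (K i); first by rewrite bm_K.
move/inOmP: (hn) => /(_ i); rewrite hi => /(_ isT); lia.
Qed.

Lemma begins_with_deg_inj lam mu y :
  begins_with lam y -> begins_with mu y -> kd lam = kd mu -> lam = mu.
Proof.
move=> [hn H] [hn' H'] e.
have h0 := inOm0 K (bm y); have h01 : leqd (dzero k) (kd lam) by deg_lia.
have h01' : leqd (dzero k) (kd mu) by deg_lia.
rewrite -(H h0 hn h01) -(H' h0 hn' h01'); exact: xm_congr.
Qed.

Lemma bcat_deg_inj lam mu x x' y : bcat lam x y -> bcat mu x' y -> kd lam = kd mu -> lam = mu.
Proof. move=> h1 h2; exact: begins_with_deg_inj (bcat_begins_with h1) (bcat_begins_with h2). Qed.

Lemma bcat_rpath lam x y : bcat lam x y -> rpath (bx y) = kr lam.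
Proof.
move=> /bcat_begins_with [hn H]; have h0 := inOm0 K (bm y).
have h01 : leqd (dzero k) (kd lam) by deg_lia.
by rewrite -(H h0 hn h01) xm_r /rpath (bool_irrelevance h0 (inOm0 K (bm y))).
Qed.

Lemma bcat_comp lam mu x z y : bcat mu x z -> bcat lam z y -> bcat (kcomp lam mu) x y.
Proof.
move=> hmu [hl ey [b1 b2]]; have [hm ez [a1 a2]] := hmu.
have hlm : ks lam = kr mu by rewrite hl (bcat_rpath hmu).
have dlm := kd_comp hlm.
split; [by rewrite ks_comp | rewrite ey ez /dJ dlm; deg_lia | split].
- move=> h0 h1 h01.
  have hn : inOm K (bm y) (kd lam) by rewrite ey; deg_lia.
  have h0n : leqd (dzero k) (kd lam) by deg_lia.
  have hnl : leqd (kd lam) (kd (kcomp lam mu)) by rewrite dlm; deg_lia.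
  rewrite (xm_comp (bx y) h0 hn h1 h0n hnl) b1.
  have hz0 := inOm0 K (bm z).
  have hzm : inOm K (bm z) (kd mu) by rewrite ez; deg_lia.
  have hz01 : leqd (dzero k) (kd mu) by deg_lia.
  have hy0 : inOm K (bm y) (addd (kd lam) (dzero k)) by rewrite ey ez; deg_lia.
  have hy1 : inOm K (bm y) (addd (kd lam) (kd mu)) by rewrite ey ez; deg_lia.
  have hy01 : leqd (addd (kd lam) (dzero k)) (addd (kd lam) (kd mu)) by deg_lia.
  have := b2 _ _ hz0 hzm hz01 hy0 hy1 hy01.
  rewrite a1 => e'; congr kcomp; apply: etrans _ e'; apply: xm_congr; rewrite ?dlm; deg_lia.
- move=> p q hp hq hpq hp' hq' hpq'.
  have hzp : inOm K (bm z) (addd (kd mu) p) by rewrite ez; deg_lia.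
  have hzq : inOm K (bm z) (addd (kd mu) q) by rewrite ez; deg_lia.
  have hzpq : leqd (addd (kd mu) p) (addd (kd mu) q) by deg_lia.
  have hyp : inOm K (bm y) (addd (kd lam) (addd (kd mu) p)) by rewrite ey ez; deg_lia.
  have hyq : inOm K (bm y) (addd (kd lam) (addd (kd mu) q)) by rewrite ey ez; deg_lia.
  have hypq : leqd (addd (kd lam) (addd (kd mu) p)) (addd (kd lam) (addd (kd mu) q)).
    by deg_lia.
  rewrite -(a2 p q hp hq hpq hzp hzq hzpq) -(b2 _ _ hzp hzq hzpq hyp hyq hypq).
  apply: xm_congr; rewrite dlm; deg_lia.
Qed.

Lemma bcat_decomp lam mu x y : ks lam = kr mu -> bcat (kcomp lam mu) x y ->
  exists z, bcat mu x z /\ bcat lam z y.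
Proof.
move=> hlm hc; have [hl _ _] := hc.
have [z hz] := bcat_exists (lam := mu) (x := x) ltac:(by rewrite -hl ks_comp).
have [y' hy'] := bcat_exists (lam := lam) (x := z) ltac:(by rewrite (bcat_rpath hz)).
by exists z; split => //; rewrite (bcat_functional hc (bcat_comp hz hy')).
Qed.

Lemma bcat_kid v x y : bcat (kid v) x y <-> y = x /\ rpath (bx x) = v.
Proof.
have self x0 : bcat (kid (rpath (bx x0))) x0 x0.
  split; [by rewrite ks_id | rewrite /dJ kd_id; deg_lia | split].
  - move=> h0 h1 h01.
    rewrite (xm_congr (bx x0) _ _ _ h0 h0 (leqdd _)) ?kd_id // xm_id /rpath.
    by rewrite (bool_irrelevance h0 (inOm0 K (bm x0))).
  - move=> p q hp hq hpq hp' hq' hpq'; apply: xm_congr; rewrite kd_id; deg_lia.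
split; last by move=> [-> <-].
move=> hc; have [hv _ _] := hc; rewrite ks_id in hv; subst v.
by split => //; apply: bcat_functional hc (self x).
Qed.

(* A path z beginning with mu and nu has mu eta = nu zeta = z(0, d mu v d nu). *)
Lemma begins_with_Lmin mu nu z : begins_with mu z -> begins_with nu z ->
  exists eta zeta, Lmin mu nu eta zeta /\ begins_with (kcomp mu eta) z.
Proof.
move=> [hm Hm] [hn Hn].
have ht : inOm K (bm z) (joind (kd mu) (kd nu)) by deg_lia.
have h0 := inOm0 K (bm z).
have hmt : leqd (kd mu) (joind (kd mu) (kd nu)) by deg_lia.
have hnt : leqd (kd nu) (joind (kd mu) (kd nu)) by deg_lia.
have h0m : leqd (dzero k) (kd mu) by deg_lia.
have h0n : leqd (dzero k) (kd nu) by deg_lia.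
have h0t : leqd (dzero k) (joind (kd mu) (kd nu)) by deg_lia.
set eta := @xm _ _ _ _ (bx z) _ _ hm ht hmt.
set zeta := @xm _ _ _ _ (bx z) _ _ hn ht hnt.
have e1 : @xm _ _ _ _ (bx z) _ _ h0 ht h0t = kcomp mu eta.
  by rewrite (xm_comp (bx z) h0 hm ht h0m hmt) Hm.
have e2 : @xm _ _ _ _ (bx z) _ _ h0 ht h0t = kcomp nu zeta.
  by rewrite (xm_comp (bx z) h0 hn ht h0n hnt) Hn.
have kdme : kd (kcomp mu eta) = joind (kd mu) (kd nu) by rewrite -e1 xm_deg; deg_lia.
exists eta, zeta; split; first split.
- by rewrite -(Hm h0 hm h0m) xm_s xm_r.
- by rewrite -(Hn h0 hn h0n) xm_s xm_r.
- by rewrite -e1 -e2.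
- exact: kdme.
- split; first by rewrite kdme.
  move=> h0' h1' h01'; apply: etrans _ e1; exact: xm_congr.
Qed.

Lemma bcat_common_Lmin mu nu x y z : bcat mu y z -> bcat nu x z ->
  exists eta zeta w, [/\ Lmin mu nu eta zeta, bcat eta w y & bcat zeta w x].
Proof.
move=> hy hx.
have [eta [zeta [hL hb]]] :=
  begins_with_Lmin (bcat_begins_with hy) (bcat_begins_with hx).
have [w hw] := begins_with_bcat hb.
have [hmeta hnzeta hc _] := hL.
have [y' [hw1 hw2]] := bcat_decomp hmeta hw.
rewrite (bcat_inj hw2 hy) in hw1.
rewrite hc in hw; have [x' [hx1 hx2]] := bcat_decomp hnzeta hw.
rewrite (bcat_inj hx2 hx) in hx1.
by exists eta, zeta, w.
Qed.

Lemma Lmin_bcat_common mu nu eta zeta w x y : Lmin mu nu eta zeta ->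
  bcat eta w y -> bcat zeta w x -> exists z, bcat mu y z /\ bcat nu x z.
Proof.
move=> [hme hnz hc _] h1 h2.
have [z hz] := bcat_exists (lam := mu) (x := y) ltac:(by rewrite hme (bcat_rpath h1)).
have := bcat_comp h1 hz; rewrite hc => /(bcat_decomp hnz) [x' [hx1 hx2]].
by rewrite -(bcat_functional hx1 h2); exists z.
Qed.

End BasisConcatenation.

Section IndicatorSums.
Local Open Scope R_scope.
Variable X : Type.

Definition indR (P : Prop) : R := if excluded_middle_informative P then 1 else 0.

Lemma indR_T (P : Prop) : P -> indR P = 1.
Proof. by rewrite /indR; case: excluded_middle_informative. Qed.

Lemma indR_F (P : Prop) : ~ P -> indR P = 0.
Proof. by rewrite /indR; case: excluded_middle_informative. Qed.

Lemma indR_iff P Q : (P <-> Q) -> indR P = indR Q.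
Proof.
move=> h; case: (classic P) => hp.
- by rewrite !indR_T //; apply/h.
- by rewrite !indR_F // => /h.
Qed.

Lemma indR_01 P : indR P = 0 \/ indR P = 1.
Proof. rewrite /indR; case: excluded_middle_informative; auto. Qed.

Lemma indR_sub (P Q : Prop) : (Q -> P) -> indR P - indR Q = indR (P /\ ~ Q).
Proof.
move=> h; case: (classic Q) => hq.
- rewrite (indR_T (h hq)) (indR_T hq) indR_F; [ring | tauto].
- case: (classic P) => hp.
  + rewrite (indR_T hp) (indR_F hq) indR_T; [ring | tauto].
  + rewrite (indR_F hp) (indR_F hq) indR_F; [ring | tauto].
Qed.

Lemma rsum_eq0 (f : X -> R) l : (forall b, List.In b l -> f b = 0) -> rsum f l = 0.
Proof.
elim: l => [//|a l IH] H /=; rewrite H /=; last by left.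
rewrite IH; [ring | move=> b hb; apply: H; by right].
Qed.

Lemma rsum_single (f : X -> R) l a : List.NoDup l -> List.In a l ->
  (forall b, List.In b l -> b <> a -> f b = 0) -> rsum f l = f a.
Proof.
elim: l => [//|c l IH] hnd /= hin H; inversion hnd; subst.
case: hin => [e|hin].
- subst c; rewrite rsum_eq0; first ring.
  by move=> b hb; apply: H; [right | move=> e; subst].
- rewrite H; [|by left|by move=> e; subst].
  rewrite IH //; first ring.
  by move=> b hb; apply: H; right.
Qed.

Lemma eq_rsum (f g : X -> R) l : (forall b, List.In b l -> f b = g b) -> rsum f l = rsum g l.
Proof.
elim: l => [//|a l IH] H /=; rewrite H; last by left.
by rewrite IH // => b hb; apply: H; right.
Qed.

Lemma rsum_ge0 (f : X -> R) l : (forall b, List.In b l -> 0 <= f b) -> 0 <= rsum f l.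
Proof.
elim: l => [|a l IH] H /=; first lra.
have := H a (or_introl erefl); have : 0 <= rsum f l by apply: IH => b hb; apply: H; right.
lra.
Qed.

Lemma ler_rsum (f g : X -> R) l :
  (forall b, List.In b l -> f b <= g b) -> rsum f l <= rsum g l.
Proof.
elim: l => [|a l IH] H /=; first lra.
have := H a (or_introl erefl).
have : rsum f l <= rsum g l by apply: IH => b hb; apply: H; right.
lra.
Qed.

Lemma exchange_rsum (Y : Type) (g : X -> Y -> R) l1 l2 :
  rsum (fun a => rsum (fun b => g a b) l2) l1 = rsum (fun b => rsum (fun a => g a b) l1) l2.
Proof.
elim: l1 => [|a l1 IH] /=.
- by elim: l2 => [|b l2 IH2] //=; rewrite -IH2; ring.
- rewrite IH; clear IH; elim: l2 => [|b l2 IH2] /=; [ring | rewrite -IH2; ring].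
Qed.

Lemma rsum_indR (P : X -> Prop) l : List.NoDup l ->
  (forall a b, List.In a l -> List.In b l -> P a -> P b -> a = b) ->
  rsum (fun a => indR (P a)) l = indR (exists a, List.In a l /\ P a).
Proof.
case: (classic (exists a, List.In a l /\ P a)) => [[a [ha pa]]|hn] hnd H.
- rewrite (indR_T (ex_intro _ a (conj ha pa))) (rsum_single (a := a)) // ?indR_T //.
  move=> b hb hba; apply: indR_F => pb; apply: hba; exact: H.
- rewrite indR_F // rsum_eq0 // => b hb; apply: indR_F => pb; apply: hn; by exists b.
Qed.

Lemma eq_of_abs_lt a b : (forall eps, 0 < eps -> Rabs (a - b) < eps) -> a = b.
Proof.
move=> H; apply: NNPP => hne.
have hp : 0 < Rabs (a - b) by apply: Rabs_pos_lt; lra.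
have := H _ hp; lra.
Qed.

Lemma HasSum_tsum (f : X -> R) s : HasSum f s -> tsum f = s.
Proof.
move=> hs; have ht : HasSum f (tsum f) := epsilon_spec _ _ (ex_intro _ _ hs).
have deceq (a b : X) : {a = b} + {a <> b} := excluded_middle_informative (a = b).
apply: eq_of_abs_lt => eps he; have eps2 : 0 < eps / 2 by lra.
have [F1 H1] := ht _ eps2; have [F2 H2] := hs _ eps2.
set F := List.nodup deceq (F1 ++ F2).
have hF := List.NoDup_nodup deceq (F1 ++ F2).
have inc1 : List.incl F1 F by move=> c hc; apply/List.nodup_In/List.in_or_app; left.
have inc2 : List.incl F2 F by move=> c hc; apply/List.nodup_In/List.in_or_app; right.
have := H1 F hF inc1; have := H2 F hF inc2.
move: (rsum f F) => r h2 h1.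
have := Rabs_triang (tsum f - r) (r - s).
rewrite -Rabs_Ropp Ropp_minus_distr in h1.
have -> : tsum f - r + (r - s) = tsum f - s by ring.
lra.
Qed.

Lemma tsum_single (f : X -> R) z0 : (forall z, z <> z0 -> f z = 0) -> tsum f = f z0.
Proof.
move=> H; apply: HasSum_tsum => eps he; exists [:: z0] => F hF hinc.
have hz : List.In z0 F by apply: hinc; left.
rewrite (rsum_single hF hz); first by rewrite Rminus_diag Rabs_R0.
by move=> b _ hb; exact: H.
Qed.

Lemma tsum_eq0 (f : X -> R) : (forall z, f z = 0) -> tsum f = 0.
Proof.
move=> H; apply: HasSum_tsum => eps he; exists [::] => F hF hinc.
by rewrite rsum_eq0 // Rminus_diag Rabs_R0.
Qed.

Lemma tsum_indR_mul (P Q : X -> Prop) : (forall z z', P z -> Q z -> P z' -> Q z' -> z = z') ->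
  tsum (fun z => indR (P z) * indR (Q z)) = indR (exists z, P z /\ Q z).
Proof.
move=> H.
have vanish z : ~ (P z /\ Q z) -> indR (P z) * indR (Q z) = 0.
  move=> hn; case: (classic (P z)) => hp; last by rewrite indR_F //; ring.
  by rewrite (indR_F (P := Q z)) ?Rmult_0_r // => hq; apply: hn.
case: (classic (exists z, P z /\ Q z)) => [[z0 [p0 q0]]|hn].
- rewrite (tsum_single (z0 := z0)) ?(indR_T p0) ?(indR_T q0) ?indR_T; [ring | by exists z0|].
  by move=> z hz; apply: vanish => -[hp hq]; apply: hz; apply: H.
- rewrite indR_F // tsum_eq0 // => z; apply: vanish => hz; apply: hn; by exists z.
Qed.

Definition indop (P : X -> X -> Prop) : op X := fun y x => indR (P y x).

Lemma meqE (A B : op X) : meq A B -> A = B.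
Proof. by move=> H; do 2 (apply: functional_extensionality => ?); exact: H. Qed.

Lemma eq_indop (P Q : X -> X -> Prop) : (forall y x, P y x <-> Q y x) -> indop P = indop Q.
Proof. by move=> H; apply: meqE => y x; exact: indR_iff. Qed.

Lemma mmul_indop (P Q : X -> X -> Prop) :
  (forall y x z z', P y z -> Q z x -> P y z' -> Q z' x -> z = z') ->
  mmul (indop P) (indop Q) = indop (fun y x => exists z, P y z /\ Q z x).
Proof. by move=> H; apply: meqE => y x; apply: tsum_indR_mul => z z'; exact: H. Qed.

End IndicatorSums.

Section ToeplitzFamily.
Local Open Scope R_scope.
Variables (k : nat) (G : kgraph k) (K : pred 'I_k).
Notation Mor := (kMor G).
Notation X := (bidx G K).
Notation T := (Tpoint K).

Lemma Tpoint_indop (lam : Mor) : T lam = indop (fun y x => bcat lam x y).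
Proof. by []. Qed.

Lemma Tpoint_kid (v : kObj G) : T (kid v) = indop (fun y x => y = x /\ rpath (bx x) = v).
Proof. by apply: eq_indop => y x; exact: bcat_kid. Qed.

Lemma Tpoint_mul_adj (lam mu : Mor) :
  mmul (T lam) (adj (T mu)) = indop (fun y x => exists w, bcat lam w y /\ bcat mu w x).
Proof. by rewrite mmul_indop // => y x z z' h1 _ h2 _; exact: bcat_inj h1 h2. Qed.

Lemma adj_mul_Tpoint (mu nu : Mor) :
  mmul (adj (T mu)) (T nu) = indop (fun y x => exists z, bcat mu y z /\ bcat nu x z).
Proof. by rewrite mmul_indop // => y x z z' h1 _ h2 _; exact: bcat_functional h1 h2. Qed.

Lemma Tpoint_range_proj (lam : Mor) :
  mmul (T lam) (adj (T lam)) = indop (fun y x => y = x /\ exists z, bcat lam z x).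
Proof.
rewrite Tpoint_mul_adj; apply: eq_indop => y x; split.
- by move=> [z [h1 h2]]; split; [exact: bcat_functional h1 h2 | exists z].
- by move=> [-> [z h]]; exists z.
Qed.

Lemma Tpoint_range_proj_fun :
  (fun lam : Mor => mmul (T lam) (adj (T lam))) =
  (fun lam => indop (fun y x => y = x /\ exists z, bcat lam z x)).
Proof. apply: functional_extensionality => lam; exact: Tpoint_range_proj. Qed.

Lemma Tpoint_source_proj (lam : Mor) : mmul (adj (T lam)) (T lam) = T (kid (ks lam)).
Proof.
rewrite adj_mul_Tpoint Tpoint_kid; apply: eq_indop => y x; split.
- by move=> [z [h1 h2]]; split; [exact: bcat_inj h1 h2 | case: h2].
- by move=> [-> h]; have [z hz] := bcat_exists (esym h); exists z.
Qed.

Lemma Tpoint_comp (lam mu : Mor) : ks lam = kr mu -> mmul (T lam) (T mu) = T (kcomp lam mu).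
Proof.
move=> hlm; rewrite !Tpoint_indop mmul_indop.
- apply: eq_indop => y x; split.
  + by move=> [z [h1 h2]]; exact: bcat_comp h2 h1.
  + by move=> /(bcat_decomp hlm) [z [h1 h2]]; exists z.
- by move=> y x z z' _ h1 _ h2; exact: bcat_functional h1 h2.
Qed.

Lemma Tpoint_partial_isometry_eq (lam : Mor) :
  mmul (T lam) (mmul (adj (T lam)) (T lam)) = T lam.
Proof.
rewrite Tpoint_source_proj Tpoint_kid [in LHS]Tpoint_indop mmul_indop.
- rewrite Tpoint_indop; apply: eq_indop => y x; split.
  + by move=> [z [h [ezx _]]]; subst z.
  + by move=> h; exists x; split => //; split => //; case: h.
- by move=> y x z z' _ [-> _] _ [-> _].
Qed.

(* Each row of a 0/1 matrix with injective support has at most one 1. *)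
Lemma Tpoint_row_sq (lam : Mor) (F : seq X) (c : X -> R) y : List.NoDup F ->
  (let u := rsum (fun x => T lam y x * c x) F in u * u) =
  rsum (fun x => T lam y x * (c x * c x)) F.
Proof.
move=> hF /=; rewrite Tpoint_indop /indop.
case: (classic (exists x0, List.In x0 F /\ bcat lam x0 y)) => [[x0 [hx0 hc]]|hn].
- have off b : b <> x0 -> indR (bcat lam b y) = 0.
    by move=> hb; apply: indR_F => hb'; apply: hb; exact: bcat_inj hb' hc.
  rewrite !(rsum_single hF hx0) ?indR_T //; first ring.
  + by move=> b _ hb; rewrite off //; ring.
  + by move=> b _ hb; rewrite off //; ring.
- have off b : List.In b F -> indR (bcat lam b y) = 0.
    by move=> hb; apply: indR_F => hb'; apply: hn; exists b.
  by rewrite !rsum_eq0 => [|b hb|b hb]; rewrite ?off //; ring.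
Qed.

Lemma Tpoint_bounded (lam : Mor) : Defs.bounded (T lam).
Proof.
exists 1 => F G' c hF hG.
rewrite (eq_rsum (g := fun y => rsum (fun x => T lam y x * (c x * c x)) F)); last first.
  by move=> y _; exact: Tpoint_row_sq.
rewrite exchange_rsum Rmult_1_l; apply: ler_rsum => x _.
rewrite Tpoint_indop /indop.
case: (classic (exists y0, List.In y0 G' /\ bcat lam x y0)) => [[y0 [hy0 hc]]|hn].
- rewrite (rsum_single hG hy0) ?indR_T //; first lra.
  move=> b _ hb; rewrite indR_F; first ring.
  by move=> hb'; apply: hb; exact: bcat_functional hb' hc.
- rewrite rsum_eq0; first nra.
  by move=> b hb; rewrite indR_F; [ring | move=> hb'; apply: hn; exists b].
Qed.

Lemma Tpoint_kid_projection (v : kObj G) : is_projection (T (kid v)).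
Proof.
rewrite Tpoint_kid; split.
- by move=> y x; apply: indR_iff; split; move=> [-> ->].
- rewrite mmul_indop; last by move=> y x z z' _ [-> _] _ [-> _].
  move=> y x; apply: indR_iff; split.
  + by move=> [z [[-> _] [-> ->]]].
  + by move=> [-> h]; exists x.
Qed.

Lemma Tpoint_kid_orthogonal (v w : kObj G) :
  v <> w -> meq (mmul (T (kid v)) (T (kid w))) (@mzero X).
Proof.
move=> hvw; rewrite !Tpoint_kid mmul_indop; last by move=> y x z z' _ [-> _] _ [-> _].
move=> y x; apply: indR_F => -[z [[_ hz] [ezx hx]]].
by apply: hvw; subst z; rewrite -hz -hx.
Qed.

(* The ranges of T_lam, lam in v Lambda^n, are disjoint: a path begins with at
   most one lam of degree n. *)
Lemma Tpoint_range_sum (l : seq Mor) (n : deg k) : List.NoDup l ->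
  (forall lam, List.In lam l -> kd lam = n) ->
  msum (fun lam => mmul (T lam) (adj (T lam))) l =
  indop (fun y x => exists lam, List.In lam l /\ (y = x /\ exists z, bcat lam z x)).
Proof.
move=> hl hn; rewrite Tpoint_range_proj_fun; apply: meqE => y x.
rewrite /msum /indop rsum_indR // => a b ha hb [_ [z hz]] [_ [z' hz']].
by apply: bcat_deg_inj hz hz' _; rewrite hn ?hn.
Qed.

Lemma Tpoint_T4 (v : kObj G) (n : deg k) (l : seq Mor) : List.NoDup l ->
  (forall lam, List.In lam l <-> (kr lam = v /\ kd lam = n)) ->
  Defs.positive (msub (T (kid v)) (msum (fun lam => mmul (T lam) (adj (T lam))) l)).
Proof.
move=> hl hs.
rewrite (Tpoint_range_sum hl (n := n)); last by move=> lam /hs [].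
set P := fun y x => exists lam, List.In lam l /\ (y = x /\ exists z, bcat lam z x).
have -> : msub (T (kid v)) (indop P) =
    indop (fun y x => (y = x /\ rpath (bx x) = v) /\ ~ P y x).
  rewrite Tpoint_kid; apply: meqE => y x; apply: indR_sub.
  move=> [lam [hin [-> [z hz]]]]; split => //.
  by have [<- _] := (hs lam).1 hin; exact: bcat_rpath hz.
split.
- by move=> y x; apply: indR_iff; split => -[[-> h] hn].
- move=> F c hF; apply: rsum_ge0 => y hy; rewrite /indop (rsum_single hF hy).
  + by case: (indR_01 ((y = y /\ rpath (bx y) = v) /\ ~ P y y)) => ->; nra.
  + by move=> b _ hb; rewrite indR_F; [ring | move=> [[e _] _]; apply: hb].
Qed.

Lemma Tpoint_T5 (mu nu : Mor) (l : seq (Mor * Mor)) : List.NoDup l ->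
  (forall pr, List.In pr l <-> Lmin mu nu pr.1 pr.2) ->
  meq (mmul (adj (T mu)) (T nu)) (msum (fun pr => mmul (T pr.1) (adj (T pr.2))) l).
Proof.
move=> hl hs y x; rewrite adj_mul_Tpoint /msum.
rewrite (eq_rsum (g := fun pr => indR (exists w, bcat pr.1 w y /\ bcat pr.2 w x)));
  last by move=> pr _; rewrite Tpoint_mul_adj.
rewrite /indop rsum_indR //.
- apply: indR_iff; split.
  + move=> [z [hy hx]]; have [eta [zeta [w [hL h1 h2]]]] := bcat_common_Lmin hy hx.
    by exists (eta, zeta); split; [exact/hs | exists w].
  + move=> [[eta zeta] [/hs hL [w [h1 h2]]]]; exact: Lmin_bcat_common hL h1 h2.
- move=> [a b] [a' b'] /hs La /hs Lb [w [h1 h2]] [w' [h1' h2']] /=.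
  have ea : a = a' by apply: bcat_deg_inj h1 h1' _; rewrite (Lmin_deg_l La) (Lmin_deg_l Lb).
  have eb : b = b' by apply: bcat_deg_inj h2 h2' _; rewrite (Lmin_deg_r La) (Lmin_deg_r Lb).
  by rewrite ea eb.
Qed.

(* For i in K a boundary path x has infinite degree in direction i, so x(0, e_i)
   is an edge of v Lambda^{e_i} with which x begins. *)
Lemma begins_with_edge (i : 'I_k) (x : X) : K i ->
  exists e, [/\ kr e = rpath (bx x), kd e = unit_deg i & begins_with e x].
Proof.
move=> Ki.
have hi : inOm K (bm x) (unit_deg i).
  apply/inOmP => j hj; rewrite /unit_deg ffunE; case: eqP => [ej|] //.
  by subst j; rewrite Ki in hj.
have h0 := inOm0 K (bm x).
have h0i : leqd (dzero k) (unit_deg i) by deg_lia.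
set e := @xm _ _ _ _ (bx x) _ _ h0 hi h0i.
have kde : kd e = unit_deg i.
  by rewrite /e xm_deg; apply/degP => j; rewrite /unit_deg /dzero !ffunE; lia.
exists e; split => //.
- by rewrite /e xm_r /rpath (bool_irrelevance h0 (inOm0 K (bm x))).
- by split; [rewrite kde | move=> h0' h1' h01'; exact: xm_congr].
Qed.

Lemma Tpoint_CK (v : kObj G) (i : 'I_k) (l : seq Mor) : K i -> List.NoDup l ->
  (forall e, List.In e l <-> (kr e = v /\ kd e = unit_deg i)) ->
  meq (msum (fun e => mmul (T e) (adj (T e))) l) (T (kid v)).
Proof.
move=> Ki hl hs.
rewrite (Tpoint_range_sum hl (n := unit_deg i)); last by move=> e /hs [].
rewrite Tpoint_kid => y x; apply: indR_iff; split.
- move=> [e [/hs [<- _] [-> [z hz]]]]; split => //; exact: bcat_rpath hz.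
- move=> [-> hv]; have [e [hr hd hb]] := begins_with_edge x Ki.
  exists e; split; first by apply/hs; rewrite hr.
  by split => //; exact: begins_with_bcat hb.
Qed.

End ToeplitzFamily.

Theorem proposition3p5 (k : nat) (G : kgraph k) (K : pred 'I_k) :
  kfinite G -> no_sources G ->
  (exists i : 'I_k, K i) -> (exists i : 'I_k, ~~ K i) ->
  TCK_family (@Tpoint k G K) /\
  (forall (v : kObj G) (i : 'I_k) (l : seq (kMor G)), K i -> List.NoDup l ->
     (forall e, List.In e l <-> (kr e = v /\ kd e = unit_deg i)) ->
     meq (msum (fun e => mmul (Tpoint K e) (adj (Tpoint K e))) l) (Tpoint K (kid v))).
Proof.
move=> _ _ _ _; split; last exact: Tpoint_CK.
split.
- move=> lam; split; first exact: Tpoint_bounded.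
  by rewrite Tpoint_partial_isometry_eq.
- split; [exact: Tpoint_kid_projection | exact: Tpoint_kid_orthogonal].
- by move=> lam mu h; rewrite Tpoint_comp.
- by move=> lam; rewrite Tpoint_source_proj.
- split; [exact: Tpoint_T4 | exact: Tpoint_T5].
Qed.
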